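(* For a given diagonal section $\delta$ we have $\mu_\delta=\mu(D_\delta)$, where $D_\delta(x,y)=\overline{C}_\delta(x,y)$ for $x\le y$ and $D_\delta(x,y)=B_\delta(x,y)$ for $x\ge y$.
   Context: A diagonal section is a function $\delta\colon[0,1]\to[0,1]$ that is the diagonal $x\mapsto C(x,x)$ of some bivariate copula $C$; equivalently $\delta(x)\le x$, $0\le\delta(y)-\delta(x)\le 2(y-x)$ for $x\le y$, and $\delta(1)=1$. Write $\widehat{\delta}(x)=x-\delta(x)$. $\overline{C}_\delta(x,y)=\sup\{C(x,y)\colon C \text{ a copula with diagonal section } \delta\}$, and $B_\delta(x,y)=\min\{x,y\}-\min_{t\in[\min\{x,y\},\max\{x,y\}]}\widehat{\delta}(t)$ is the Bertino copula. The function $D_\delta$ (diagonal splice of $\overline{C}_\delta$ and $B_\delta$) is a copula with diagonal section $\delta$. For a copula $C$, its asymmetry is $\mu(C)=\max\{|C(x,y)-C(y,x)|\colon x,y\in[0,1]\}$, and $\mu_\delta=\sup\{\mu(C)\colon C \text{ a copula with diagonal section } \delta\}$ is the maximal asymmetry of copulas with diagonal section $\delta$. *)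

From mathcomp Require Import all_boot all_order all_algebra.
From mathcomp Require Import all_classical all_reals.
Set Implicit Arguments. Unset Strict Implicit. Unset Printing Implicit Defensive.
Import Order.TTheory GRing.Theory Num.Theory.
Local Open Scope classical_set_scope.
Local Open Scope ring_scope.

Section CopulaDefs.
Variable R : realType.

Definition unit_I : set R := [set x | 0 <= x <= 1].

(* A bivariate copula, viewed as a function R -> R -> R whose values on
   [0,1]^2 are what matters: groundedness, uniform margins, 2-increasing. *)
Definition is_copula (C : R -> R -> R) : Prop :=
  (forall x, 0 <= x <= 1 -> C x 0 = 0 /\ C 0 x = 0 /\ C x 1 = x /\ C 1 x = x) /\
  (forall x1 x2 y1 y2, 0 <= x1 -> x1 <= x2 -> x2 <= 1 ->
      0 <= y1 -> y1 <= y2 -> y2 <= 1 ->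
      0 <= C x2 y2 - C x2 y1 - C x1 y2 + C x1 y1).

Definition has_diagonal (C : R -> R -> R) (delta : R -> R) : Prop :=
  forall x, 0 <= x <= 1 -> C x x = delta x.

Definition diagonal_section (delta : R -> R) : Prop :=
  exists C, is_copula C /\ has_diagonal C delta.

Definition copulas_with_diag (delta : R -> R) : set (R -> R -> R) :=
  [set C | is_copula C /\ has_diagonal C delta].

Definition delta_hat (delta : R -> R) (x : R) : R := x - delta x.

Definition Cbar (delta : R -> R) (x y : R) : R :=
  sup [set C x y | C in copulas_with_diag delta].

Definition Bertino (delta : R -> R) (x y : R) : R :=
  Num.min x y -
  inf [set delta_hat delta t | t in [set t | Num.min x y <= t <= Num.max x y]].

Definition Ddelta (delta : R -> R) (x y : R) : R :=
  if x <= y then Cbar delta x y else Bertino delta x y.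

Definition asym (C : R -> R -> R) : R :=
  sup [set `|C xy.1 xy.2 - C xy.2 xy.1| | xy in unit_I `*` unit_I].

Definition max_asym (delta : R -> R) : R :=
  sup [set asym C | C in copulas_with_diag delta].

End CopulaDefs.

From mathcomp Require Import all_boot all_order all_algebra.
From mathcomp Require Import all_classical all_reals.
From mathcomp Require Import lra.
Set Implicit Arguments. Unset Strict Implicit. Unset Printing Implicit Defensive.
Import Order.TTheory GRing.Theory Num.Theory.
Local Open Scope classical_set_scope.
Local Open Scope ring_scope.

(* Every copula C with diagonal delta lies between the Bertino copula B_delta
   and the pointwise supremum Cbar_delta, and so does its transpose; hence
   |C(x,y) - C(y,x)| <= Cbar_delta(x,y) - B_delta(x,y) = |D_delta(x,y) - D_delta(y,x)|
   for x < y.  Conversely, gluing such a C above the diagonal to B_delta below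
   it gives again a copula with diagonal delta, whose skew at (x,y) is
   C(x,y) - B_delta(x,y); taking the supremum over C gives
   Cbar_delta - B_delta <= mu_delta.  The glued function is 2-increasing because
   every rectangle splits into rectangles above the diagonal, rectangles below
   it, and a square centred on it, where B_delta(b,a) <= C(b,a) suffices. *)

Section Copulas.
Variable R : realType.
Implicit Types (F C : R -> R -> R) (delta : R -> R) (x y K : R).

Definition volume F (x1 x2 y1 y2 : R) := F x2 y2 - F x2 y1 - F x1 y2 + F x1 y1.

Lemma volume_ge0_from_diagonal_blocks F :
  (forall x1 x2 y1 y2, 0 <= x1 -> x1 <= x2 -> x2 <= y1 -> y1 <= y2 -> y2 <= 1 ->
     0 <= volume F x1 x2 y1 y2) ->
  (forall x1 x2 y1 y2, 0 <= y1 -> y1 <= y2 -> y2 <= x1 -> x1 <= x2 -> x2 <= 1 ->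
     0 <= volume F x1 x2 y1 y2) ->
  (forall a b, 0 <= a -> a <= b -> b <= 1 -> 0 <= volume F a b a b) ->
  forall x1 x2 y1 y2, 0 <= x1 -> x1 <= x2 -> x2 <= 1 ->
    0 <= y1 -> y1 <= y2 -> y2 <= 1 -> 0 <= volume F x1 x2 y1 y2.
Proof.
move=> above below square x1 x2 y1 y2 x1_ge0 x12 x2_le1 y1_ge0 y12 y2_le1.
have [x2y1|y1x2] := leP x2 y1; first exact: above.
have [y2x1|x1y2] := leP y2 x1; first exact: below.
have [p [x1p y1p pE]] : exists p, [/\ x1 <= p, y1 <= p & p = x1 \/ p = y1].
  by case: (leP x1 y1) => h; [exists y1 | exists x1]; split; lra.
have [q [qx2 qy2 qE]] : exists q, [/\ q <= x2, q <= y2 & q = x2 \/ q = y2].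
  by case: (leP x2 y2) => h; [exists x2 | exists y2]; split; lra.
have pq : p <= q by lra.
(* The three-by-three grid cut out by the diagonal points (p,p) and (q,q). *)
have c11 : 0 <= volume F x1 p y1 p.
  by case: pE => e; [apply: below | apply: above]; lra.
have c33 : 0 <= volume F q x2 q y2.
  by case: qE => e; [apply: above | apply: below]; lra.
clear pE qE.
have c12 : 0 <= volume F x1 p p q by apply: above; lra.
have c13 : 0 <= volume F x1 p q y2 by apply: above; lra.
have c23 : 0 <= volume F p q q y2 by apply: above; lra.
have c21 : 0 <= volume F p q y1 p by apply: below; lra.
have c31 : 0 <= volume F q x2 y1 p by apply: below; lra.
have c32 : 0 <= volume F q x2 p q by apply: below; lra.
have c22 : 0 <= volume F p q p q by apply: square; lra.
move: c11 c12 c13 c21 c22 c23 c31 c32 c33; rewrite /volume; lra.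
Qed.

Section CopulaBounds.
Variable C : R -> R -> R.
Hypothesis C_copula : is_copula C.

Let copula_boundary x : 0 <= x -> x <= 1 ->
  C x 0 = 0 /\ C 0 x = 0 /\ C x 1 = x /\ C 1 x = x.
Proof. by move=> x0 x1; apply: C_copula.1; rewrite x0 x1. Qed.

Lemma copula_x0 x : 0 <= x -> x <= 1 -> C x 0 = 0.
Proof. by move=> x0 x1; case: (copula_boundary x0 x1). Qed.

Lemma copula_0x x : 0 <= x -> x <= 1 -> C 0 x = 0.
Proof. by move=> x0 x1; case: (copula_boundary x0 x1) => _ []. Qed.

Lemma copula_x1 x : 0 <= x -> x <= 1 -> C x 1 = x.
Proof. by move=> x0 x1; case: (copula_boundary x0 x1) => _ [_ []]. Qed.

Lemma copula_1x x : 0 <= x -> x <= 1 -> C 1 x = x.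
Proof. by move=> x0 x1; case: (copula_boundary x0 x1) => _ [_ []]. Qed.

Lemma copula_volume_ge0 x1 x2 y1 y2 : 0 <= x1 -> x1 <= x2 -> x2 <= 1 ->
  0 <= y1 -> y1 <= y2 -> y2 <= 1 -> 0 <= volume C x1 x2 y1 y2.
Proof. exact: C_copula.2. Qed.

Lemma copula_le_r x y1 y2 : 0 <= x -> x <= 1 -> 0 <= y1 -> y1 <= y2 -> y2 <= 1 ->
  C x y1 <= C x y2.
Proof.
move=> x0 x1 y10 y12 y21.
have := copula_volume_ge0 (lexx 0) x0 x1 y10 y12 y21.
rewrite /volume !copula_0x; lra.
Qed.

Lemma copula_lipschitz_l x1 x2 y : 0 <= x1 -> x1 <= x2 -> x2 <= 1 -> 0 <= y -> y <= 1 ->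
  C x2 y - C x1 y <= x2 - x1.
Proof.
move=> x10 x12 x21 y0 y1.
have := copula_volume_ge0 x10 x12 x21 y0 y1 (lexx 1).
rewrite /volume !copula_x1; lra.
Qed.

Lemma copula_ge0 x y : 0 <= x -> x <= 1 -> 0 <= y -> y <= 1 -> 0 <= C x y.
Proof. by move=> x0 x1 y0 y1; rewrite -(copula_x0 x0 x1) copula_le_r. Qed.

Lemma copula_le_l x y : 0 <= x -> x <= 1 -> 0 <= y -> y <= 1 -> C x y <= x.
Proof. by move=> x0 x1 y0 y1; rewrite -[leRHS](copula_x1 x0 x1) copula_le_r. Qed.

Lemma copula_transpose : is_copula (fun x y => C y x).
Proof.
split.
  by move=> x /andP[x0 x1]; rewrite copula_x0 ?copula_0x ?copula_x1 ?copula_1x.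
by move=> x1 x2 y1 y2 *; have := @copula_volume_ge0 y1 y2 x1 x2; rewrite /volume; lra.
Qed.

End CopulaBounds.

Definition delta_hat_min delta (a b : R) :=
  inf [set delta_hat delta t | t in [set t | a <= t <= b]].

Lemma Bertino_sym delta x y : Bertino delta x y = Bertino delta y x.
Proof. by rewrite /Bertino minC maxC. Qed.

Lemma BertinoE delta x y : x <= y -> Bertino delta x y = x - delta_hat_min delta x y.
Proof. by move=> xy; rewrite /Bertino min_l // max_r. Qed.

Lemma BertinoEr delta x y : y <= x -> Bertino delta x y = y - delta_hat_min delta y x.
Proof. by move=> yx; rewrite Bertino_sym BertinoE. Qed.

Section DeltaHatMin.
Variable delta : R -> R.
Hypothesis delta_hat_ge0 : forall t, 0 <= t -> t <= 1 -> 0 <= delta_hat delta t.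

Lemma delta_hat_min_le a b t : 0 <= a -> b <= 1 -> a <= t -> t <= b ->
  delta_hat_min delta a b <= delta_hat delta t.
Proof.
move=> a0 b1 a_t tb; apply: ge_inf; last by exists t; rewrite //= a_t tb.
by exists 0 => _ [s /andP[a_s sb] <-]; apply: delta_hat_ge0; lra.
Qed.

Lemma delta_hat_min_ge a b z : a <= b ->
  (forall t, a <= t -> t <= b -> z <= delta_hat delta t) -> z <= delta_hat_min delta a b.
Proof.
move=> ab z_le; apply: lb_le_inf; first by exists (delta_hat delta a), a; rewrite //= lexx.
by move=> _ [t /andP[a_t tb] <-]; apply: z_le.
Qed.

Lemma delta_hat_min_eq0 a b t : 0 <= a -> a <= t -> t <= b -> b <= 1 ->
  delta_hat delta t = 0 -> delta_hat_min delta a b = 0.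
Proof.
move=> a0 a_t tb b1 t0; apply: le_anti.
rewrite -[X in _ <= X]t0 delta_hat_min_le //=.
by apply: delta_hat_min_ge => [|s ? ?]; [lra | apply: delta_hat_ge0; lra].
Qed.

Lemma delta_hat_min_sub a b c d : 0 <= a -> a <= c -> c <= d -> d <= b -> b <= 1 ->
  delta_hat_min delta a b <= delta_hat_min delta c d.
Proof. by move=> *; apply: delta_hat_min_ge => // t *; apply: delta_hat_min_le; lra. Qed.

Lemma delta_hat_min_union a b c d : 0 <= a -> a <= c -> c <= b -> b <= d -> d <= 1 ->
  delta_hat_min delta a d = Num.min (delta_hat_min delta a b) (delta_hat_min delta c d).
Proof.
move=> a0 ac cb bd d1; apply: le_anti; rewrite le_min !delta_hat_min_sub //=; try lra.
apply: delta_hat_min_ge => [|t a_t td]; first lra.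
rewrite ge_min; have [tb|bt] := leP t b.
  by rewrite delta_hat_min_le //; lra.
by rewrite orbC delta_hat_min_le //; lra.
Qed.

Lemma Bertino_volume_ge0_below x1 x2 y1 y2 :
  0 <= y1 -> y1 <= y2 -> y2 <= x1 -> x1 <= x2 -> x2 <= 1 ->
  0 <= volume (Bertino delta) x1 x2 y1 y2.
Proof.
move=> y10 y12 y2x1 x12 x21.
rewrite /volume !BertinoEr ?(delta_hat_min_union y10 y12 y2x1 x12 x21); try lra.
have m1 : delta_hat_min delta y1 x1 <= delta_hat_min delta y2 x1.
  by apply: delta_hat_min_sub; lra.
have m2 : delta_hat_min delta y2 x2 <= delta_hat_min delta y2 x1.
  by apply: delta_hat_min_sub; lra.
set m11 := delta_hat_min delta y1 x1; set m22 := delta_hat_min delta y2 x2.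
by rewrite minEle; have [m|m] := leP m11 m22; lra.
Qed.

End DeltaHatMin.

Definition splice F delta (x y : R) := if x <= y then F x y else Bertino delta x y.

Lemma splice_upper F delta x y : x <= y -> splice F delta x y = F x y.
Proof. by rewrite /splice => ->. Qed.

Lemma splice_skew F delta x y : x < y ->
  splice F delta x y - splice F delta y x = F x y - Bertino delta x y.
Proof. by move=> xy; rewrite /splice ltW // lt_geF // Bertino_sym. Qed.

Section CopulaWithDiagonal.
Variables (C : R -> R -> R) (delta : R -> R).
Hypotheses (C_copula : is_copula C) (C_diag : has_diagonal C delta).

Lemma copula_delta_hat_ge0 t : 0 <= t -> t <= 1 -> 0 <= delta_hat delta t.
Proof.
move=> t0 t1; rewrite /delta_hat -C_diag ?t0 ?t1 // subr_ge0.
exact: copula_le_l.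
Qed.

Lemma Bertino_le_upper x y : 0 <= x -> x <= y -> y <= 1 -> Bertino delta x y <= C x y.
Proof.
move=> x0 xy y1; rewrite BertinoE //.
suff : x - C x y <= delta_hat_min delta x y by lra.
apply: delta_hat_min_ge => // t xt ty.
have := copula_le_r C_copula (le_trans x0 xt) (le_trans ty y1) (le_trans x0 xt) ty y1.
have := copula_lipschitz_l C_copula x0 xt (le_trans ty y1) (le_trans x0 xy) y1.
by rewrite /delta_hat -C_diag ?(le_trans x0 xt) ?(le_trans ty y1); lra.
Qed.

End CopulaWithDiagonal.

Lemma Bertino_le C delta x y : is_copula C -> has_diagonal C delta ->
  0 <= x -> x <= 1 -> 0 <= y -> y <= 1 -> Bertino delta x y <= C x y.
Proof.
move=> C_copula C_diag x0 x1 y0 y1; have [xy|yx] := leP x y.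
  exact: Bertino_le_upper.
by rewrite Bertino_sym; apply: (Bertino_le_upper (copula_transpose C_copula)) => //; exact: ltW.
Qed.

Section SpliceCopula.
Variables (C : R -> R -> R) (delta : R -> R).
Hypotheses (C_copula : is_copula C) (C_diag : has_diagonal C delta).

Let delta_hat_ge0 := copula_delta_hat_ge0 C_copula C_diag.

Lemma Bertino_diag x : 0 <= x -> x <= 1 -> Bertino delta x x = delta x.
Proof.
move=> x0 x1; rewrite BertinoE //.
have -> : delta_hat_min delta x x = delta_hat delta x.
  apply: le_anti; rewrite delta_hat_min_le //=.
  by apply: delta_hat_min_ge => // t xt tx; rewrite (@le_anti _ _ t x) ?xt ?tx.
by rewrite /delta_hat; lra.
Qed.

Lemma splice_lower x y : 0 <= y -> y <= x -> x <= 1 -> splice C delta x y = Bertino delta x y.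
Proof.
rewrite /splice => y0 yx x1; case: ifP => // xy.
have -> : y = x by apply: le_anti; rewrite xy yx.
by rewrite C_diag ?Bertino_diag ?x1 ?(le_trans y0 yx).
Qed.

Lemma splice_diag : has_diagonal (splice C delta) delta.
Proof. by move=> x x01; rewrite splice_upper // C_diag. Qed.

Lemma splice_copula : is_copula (splice C delta).
Proof.
have dhat0 : delta_hat delta 0 = 0.
  by rewrite /delta_hat -C_diag ?lexx ?ler01 // (copula_x0 C_copula) ?lexx ?ler01 // subr0.
have dhat1 : delta_hat delta 1 = 0.
  by rewrite /delta_hat -C_diag ?lexx ?ler01 // (copula_x1 C_copula) ?lexx ?ler01 // subrr.
split=> [x /andP[x0 x1] | ].
  rewrite splice_lower ?lexx // splice_upper // splice_upper // splice_lower ?lexx //.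
  rewrite BertinoEr // BertinoEr // (copula_0x C_copula) // (copula_x1 C_copula) //.
  rewrite (delta_hat_min_eq0 delta_hat_ge0 (lexx 0) (lexx 0) x0 x1 dhat0).
  by rewrite (delta_hat_min_eq0 delta_hat_ge0 x0 x1 (lexx 1) (lexx 1) dhat1) !subr0.
apply: volume_ge0_from_diagonal_blocks => [x1 x2 y1 y2 * | x1 x2 y1 y2 * | a b a0 ab b1].
- rewrite /volume !splice_upper; try lra.
  by apply: copula_volume_ge0 => //; lra.
- rewrite /volume !splice_lower; try lra.
  by apply: Bertino_volume_ge0_below => //; lra.
- have := copula_volume_ge0 C_copula a0 ab b1 a0 ab b1.
  have := Bertino_le C_copula C_diag (le_trans a0 ab) b1 a0 (le_trans ab b1).
  rewrite /volume (splice_lower a0) // (splice_upper _ _ ab) !splice_upper //; lra.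
Qed.

End SpliceCopula.

Lemma in_unit_I x : 0 <= x -> x <= 1 -> unit_I x.
Proof. by move=> x0 x1; rewrite /unit_I /= x0 x1. Qed.

Lemma asym_ge F K x y :
  (forall x y, unit_I x -> unit_I y -> `|F x y - F y x| <= K) ->
  unit_I x -> unit_I y -> `|F x y - F y x| <= asym F.
Proof.
move=> F_le x01 y01; apply: ub_le_sup; last by exists (x, y).
by exists K => _ [[u v] [u01 v01] <-]; apply: F_le.
Qed.

Lemma asym_le F K :
  (forall x y, unit_I x -> unit_I y -> `|F x y - F y x| <= K) -> asym F <= K.
Proof.
move=> F_le; apply: ge_sup => [|_ [[u v] [u01 v01] <-]]; last exact: F_le.
by exists `|F 0 0 - F 0 0|, (0, 0) => //; split; apply: in_unit_I; rewrite ?lexx ?ler01.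
Qed.

Lemma asym_ge0 F K :
  (forall x y, unit_I x -> unit_I y -> `|F x y - F y x| <= K) -> 0 <= asym F.
Proof.
move=> F_le; have := asym_ge F_le (in_unit_I (lexx 0) ler01) (in_unit_I (lexx 0) ler01).
by rewrite subrr normr0.
Qed.

Lemma skew_le_of_lt F K : 0 <= K ->
  (forall x y, 0 <= x -> x < y -> y <= 1 -> `|F x y - F y x| <= K) ->
  forall x y, unit_I x -> unit_I y -> `|F x y - F y x| <= K.
Proof.
move=> K0 F_le x y /andP[x0 x1] /andP[y0 y1].
have [xy|yx|->] := ltgtP x y; first exact: F_le.
  by rewrite distrC; apply: F_le.
by rewrite subrr normr0.
Qed.

Lemma copula_skew_le1 C : is_copula C ->
  forall x y, unit_I x -> unit_I y -> `|C x y - C y x| <= 1.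
Proof.
move=> C_copula x y /andP[x0 x1] /andP[y0 y1].
have := copula_ge0 C_copula x0 x1 y0 y1; have := copula_le_l C_copula x0 x1 y0 y1.
have := copula_ge0 C_copula y0 y1 x0 x1; have := copula_le_l C_copula y0 y1 x0 x1.
by rewrite ler_norml; lra.
Qed.

Section MaximalAsymmetry.
Variable delta : R -> R.
Hypothesis delta_diagonal : diagonal_section delta.

Lemma asym_le_max_asym C : is_copula C -> has_diagonal C delta -> asym C <= max_asym delta.
Proof.
move=> C_copula C_diag; apply: ub_le_sup; last by exists C.
by exists 1 => _ [C' [C'_copula _] <-]; exact: asym_le (copula_skew_le1 C'_copula).
Qed.

Lemma max_asym_le K : (forall C, is_copula C -> has_diagonal C delta -> asym C <= K) ->
  max_asym delta <= K.
Proof.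
have [C0 C0_diag] := delta_diagonal.
by move=> asym_le_K; apply: ge_sup => [|_ [C [] ? ? <-]]; [exists (asym C0), C0 | exact: asym_le_K].
Qed.

Lemma max_asym_ge0 : 0 <= max_asym delta.
Proof.
have [C0 [C0_copula C0_diag]] := delta_diagonal.
exact: le_trans (asym_ge0 (copula_skew_le1 C0_copula)) (asym_le_max_asym C0_copula C0_diag).
Qed.

Lemma Cbar_ge C x y : is_copula C -> has_diagonal C delta ->
  0 <= x -> x <= 1 -> 0 <= y -> y <= 1 -> C x y <= Cbar delta x y.
Proof.
move=> C_copula C_diag x0 x1 y0 y1; apply: ub_le_sup; last by exists C.
exists 1 => _ [C' [C'_copula _] <-].
exact: le_trans (copula_le_l C'_copula x0 x1 y0 y1) x1.
Qed.

Lemma Cbar_le x y K : (forall C, is_copula C -> has_diagonal C delta -> C x y <= K) ->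
  Cbar delta x y <= K.
Proof.
have [C0 C0_diag] := delta_diagonal.
by move=> C_le_K; apply: ge_sup => [|_ [C [] ? ? <-]]; [exists (C0 x y), C0 | exact: C_le_K].
Qed.

Lemma copula_skew_le_gap C x y : is_copula C -> has_diagonal C delta ->
  0 <= x -> x <= y -> y <= 1 -> `|C x y - C y x| <= Cbar delta x y - Bertino delta x y.
Proof.
move=> C_copula C_diag x0 xy y1.
have y0 := le_trans x0 xy; have x1 := le_trans xy y1.
have CT_copula := copula_transpose C_copula.
have := Cbar_ge C_copula C_diag x0 x1 y0 y1.
have := Cbar_ge CT_copula C_diag x0 x1 y0 y1.
have := Bertino_le C_copula C_diag x0 x1 y0 y1.
have := Bertino_le CT_copula C_diag x0 x1 y0 y1.
by rewrite ler_norml /=; lra.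
Qed.

Lemma gap_le_max_asym x y : 0 <= x -> x < y -> y <= 1 ->
  Cbar delta x y - Bertino delta x y <= max_asym delta.
Proof.
move=> x0 xy y1; have x1 := le_trans (ltW xy) y1; have y0 := le_trans x0 (ltW xy).
suff : Cbar delta x y <= max_asym delta + Bertino delta x y by lra.
apply: Cbar_le => C C_copula C_diag.
have S_copula := splice_copula C_copula C_diag.
have := asym_le_max_asym S_copula (splice_diag C_diag).
have := asym_ge (copula_skew_le1 S_copula) (in_unit_I x0 x1) (in_unit_I y0 y1).
rewrite splice_skew //.
by have := ler_norm (C x y - Bertino delta x y); lra.
Qed.

Lemma Ddelta_skew x y : 0 <= x -> x < y -> y <= 1 ->
  `|Ddelta delta x y - Ddelta delta y x| = Cbar delta x y - Bertino delta x y.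
Proof.
have [C0 [C0_copula C0_diag]] := delta_diagonal.
move=> x0 xy y1; have x1 := le_trans (ltW xy) y1; have y0 := le_trans x0 (ltW xy).
rewrite [Ddelta delta]/Ddelta -/(splice (Cbar delta) delta) splice_skew // ger0_norm // subr_ge0.
by apply: le_trans (Bertino_le C0_copula C0_diag x0 x1 y0 y1) (Cbar_ge C0_copula C0_diag x0 x1 y0 y1).
Qed.

End MaximalAsymmetry.

End Copulas.

Theorem corollary4p4 (R : realType) (delta : R -> R) :
  diagonal_section delta -> max_asym delta = asym (Ddelta delta).
Proof.
move=> delta_diag.
have D_skew_le x y : unit_I x -> unit_I y ->
    `|Ddelta delta x y - Ddelta delta y x| <= max_asym delta.
  apply: skew_le_of_lt (max_asym_ge0 delta_diag) _ x y => x y x0 xy y1.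
  by rewrite Ddelta_skew // gap_le_max_asym.
apply/le_anti/andP; split; last exact: asym_le D_skew_le.
apply: (max_asym_le delta_diag) => C C_copula C_diag; apply: asym_le.
apply: skew_le_of_lt => [|x y x0 xy y1]; first exact: asym_ge0 D_skew_le.
apply: le_trans (copula_skew_le_gap C_copula C_diag x0 (ltW xy) y1) _.
rewrite -Ddelta_skew //; apply: asym_ge D_skew_le _ _; apply: in_unit_I => //.
  exact: le_trans (ltW xy) y1.
exact: le_trans x0 (ltW xy).
Qed.
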